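(* Let $X$ be a shift space and let $w\in\mathcal L(X)$. Let $U\subseteq\mathcal L(X)$ be a finite $X$-maximal suffix code and $V\subseteq\mathcal L(X)$ a finite $X$-maximal prefix code. Let $\ell\in\mathcal L(X)$ with $\ell w\in\mathcal L(X)$ be such that $A\ell\cap\mathcal L(X)\subseteq U$ and such that $\mathcal E_{A,V}(\ell w)$ is a tree. Set $U'=(U\setminus A\ell)\cup\{\ell\}$. Then $\mathcal E_{U',V}(w)$ is a tree if and only if $\mathcal E_{U,V}(w)$ is a tree.
   Context: $A$ is a finite alphabet; a shift space is a closed shift-invariant subset $X\subseteq A^{\mathbb Z}$; $\mathcal L(X)$ is its set of finite factors. A prefix code (resp. suffix code) is a set of words none of which is a proper prefix (resp. proper suffix) of another; a prefix (resp. suffix) code $U\subseteq\mathcal L(X)$ is $X$-maximal if it is not properly contained in a prefix (resp. suffix) code contained in $\mathcal L(X)$. For $U,V\subseteq A^*$ and $w\in\mathcal L(X)$, let $L_U(w)=\{u\in U: uw\in\mathcal L(X)\}$ and $R_V(w)=\{v\in V: wv\in\mathcal L(X)\}$; the generalized extension graph $\mathcal E_{U,V}(w)$ is the undirected bipartite graph whose vertex set is the disjoint union of $L_U(w)$ and $R_V(w)$, with an edge between $u\in L_U(w)$ and $v\in R_V(w)$ iff $uwv\in\mathcal L(X)$. (Here $A$ denotes the set of one-letter words.) *)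

From mathcomp Require Import all_boot all_order all_algebra.
Set Implicit Arguments. Unset Strict Implicit. Unset Printing Implicit Defensive.
Import GRing.Theory Num.Theory.
Local Open Scope ring_scope.

Section ShiftDefs.
Variable A : finType.

Definition config := int -> A.

Definition shift (x : config) : config := fun i => x (i + 1).

Definition window (x : config) (i : int) (n : nat) : seq A :=
  [seq x (i + (k%:Z)) | k <- iota 0 n].

(* X is closed (product topology) and shift-invariant (sigma(X) = X) *)
Definition shift_space (X : config -> Prop) : Prop :=
  (forall x : config, X x <-> X (shift x)) /\
  (forall x : config,
     (forall n : nat, exists y, X y /\
        forall i : int, - (n%:Z) <= i <= n%:Z -> y i = x i) -> X x).

Definition lang (X : config -> Prop) (w : seq A) : Prop :=
  exists (x : config) (i : int), X x /\ w = window x i (size w).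

Definition prefix_code (U : seq A -> Prop) : Prop :=
  forall u v, U u -> U v -> prefix u v -> u = v.

Definition suffix_code (U : seq A -> Prop) : Prop :=
  forall u v, U u -> U v -> suffix u v -> u = v.

Definition X_max_prefix_code (X : config -> Prop) (U : seq A -> Prop) : Prop :=
  (forall u, U u -> lang X u) /\ prefix_code U /\
  (forall U2 : seq A -> Prop, (forall u, U u -> U2 u) ->
     (forall u, U2 u -> lang X u) -> prefix_code U2 -> forall u, U2 u -> U u).

Definition X_max_suffix_code (X : config -> Prop) (U : seq A -> Prop) : Prop :=
  (forall u, U u -> lang X u) /\ suffix_code U /\
  (forall U2 : seq A -> Prop, (forall u, U u -> U2 u) ->
     (forall u, U2 u -> lang X u) -> suffix_code U2 -> forall u, U2 u -> U u).

(* vertices of the generalized extension graph: (false, u) left, (true, v) right *)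
Definition vertex := (bool * seq A)%type.

Definition ext_vertex (X : config -> Prop) (L R : seq A -> Prop) (w : seq A)
  (p : vertex) : Prop :=
  if p.1 then R p.2 /\ lang X (w ++ p.2) else L p.2 /\ lang X (p.2 ++ w).

Definition ext_edge (X : config -> Prop) (L R : seq A -> Prop) (w : seq A)
  (p q : vertex) : Prop :=
  ext_vertex X L R w p /\ ext_vertex X L R w q /\
  ((p.1 = false /\ q.1 = true /\ lang X (p.2 ++ w ++ q.2)) \/
   (p.1 = true /\ q.1 = false /\ lang X (q.2 ++ w ++ p.2))).

Fixpoint is_walk (E : vertex -> vertex -> Prop) (x : vertex) (p : seq vertex)
  : Prop :=
  match p with
  | [::] => True
  | y :: p' => E x y /\ is_walk E y p'
  end.

Definition connected (Vt : vertex -> Prop) (E : vertex -> vertex -> Prop) :=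
  forall x y, Vt x -> Vt y -> exists p, is_walk E x p /\ last x p = y.

(* a cycle: closed walk x, p_1, ..., p_k = x with k >= 3 distinct vertices *)
Definition acyclic (E : vertex -> vertex -> Prop) :=
  ~ exists x p, [/\ is_walk E x p, last x p = x, 3 <= size p & uniq p]%N.

Definition is_tree (Vt : vertex -> Prop) (E : vertex -> vertex -> Prop) :=
  (exists x, Vt x) /\ connected Vt E /\ acyclic E.

Definition ext_graph_tree (X : config -> Prop) (L R : seq A -> Prop)
  (w : seq A) : Prop :=
  is_tree (ext_vertex X L R w) (ext_edge X L R w).

(* the set A of one-letter words *)
Definition letters : seq A -> Prop := fun u => size u = 1%N.

End ShiftDefs.

(* In E_{U,V}(w) the left vertices a l (a a letter) have all their neighbours
   among the right vertices v with l w v in L(X), and with those they span a copy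
   of the tree E_{A,V}(l w) (via a |-> a l).  E_{U',V}(w) is obtained by replacing
   this subtree by the star with centre l and the same leaves.  Such a replacement
   preserves being a tree: walks are transported by collapsing the subtree onto l
   or expanding l back into it, and a cycle through one of the two trees can be
   rerouted through the other one. *)

From mathcomp Require Import all_boot all_order all_algebra.
Set Implicit Arguments. Unset Strict Implicit. Unset Printing Implicit Defensive.
Import GRing.Theory.

Section Walks.
Variable A : finType.
Implicit Types (E F : vertex A -> vertex A -> Prop) (x y z : vertex A).
Implicit Types (s t : seq (vertex A)).

Lemma walk_cat E x s t :
  is_walk E x (s ++ t) <-> is_walk E x s /\ is_walk E (last x s) t.
Proof.
elim: s x => [|y s IH] x /=; first by split=> [|[]].
by split=> [[? /IH []]|[[? ?] ?]] //; split=> //; apply/IH.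
Qed.

Lemma walk_rcons E x s y :
  is_walk E x (rcons s y) <-> is_walk E x s /\ E (last x s) y.
Proof.
rewrite -cats1; split=> [/walk_cat /= [? []] //|[? ?]].
by apply/walk_cat.
Qed.

Lemma sub_walk E F x s :
  (forall u v, E u v -> F u v) -> is_walk E x s -> is_walk F x s.
Proof. by move=> sEF; elim: s x => [|y s IH] x //= [/sEF ? /IH]. Qed.

Lemma sub_walk_mem E F x s :
  (forall u v, u \in x :: s -> v \in s -> E u v -> F u v) ->
  is_walk E x s -> is_walk F x s.
Proof.
elim: s x => [|y s IH] x //= sEF [Exy Hs]; split.
  by apply: sEF => //; rewrite ?inE eqxx.
apply: IH Hs => u v Hu Hv; apply: sEF; last by rewrite inE Hv orbT.
by rewrite inE Hu orbT.
Qed.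

Lemma map_walk E F (f : vertex A -> vertex A) x s :
  (forall u v, E u v -> F (f u) (f v)) -> is_walk E x s -> is_walk F (f x) (map f s).
Proof. by move=> fE; elim: s x => [|y s IH] x //= [/fE ? /IH]. Qed.

Lemma walk_mem (P : vertex A -> Prop) E x s :
  (forall u v, E u v -> P v) -> is_walk E x s -> forall v, v \in s -> P v.
Proof.
move=> EP; elim: s x => [|y s IH] x //= [/EP Py /IH Hs] v.
by rewrite inE => /orP[/eqP ->|/Hs].
Qed.

Definition reachable E x y := exists s, is_walk E x s /\ last x s = y.

Lemma reachable_refl E x : reachable E x x.
Proof. by exists [::]. Qed.

Lemma reachable_edge E x y : E x y -> reachable E x y.
Proof. by exists [:: y]. Qed.

Lemma reachable_trans E x y z :
  reachable E x y -> reachable E y z -> reachable E x z.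
Proof.
move=> [s [Hs <-]] [t [Ht <-]]; exists (s ++ t).
by rewrite last_cat; split=> //; apply/walk_cat.
Qed.

Lemma sub_reachable E F x y :
  (forall u v, E u v -> F u v) -> reachable E x y -> reachable F x y.
Proof. by move=> sEF [s [/(sub_walk sEF) ? ?]]; exists s. Qed.

Lemma map_reachable E F (f : vertex A -> vertex A) x y :
  (forall u v, E u v -> F (f u) (f v)) -> reachable E x y -> reachable F (f x) (f y).
Proof. by move=> fE [s [/(map_walk fE) Hs <-]]; exists (map f s); rewrite last_map. Qed.

Lemma reachable_sym E x y :
  (forall u v, E u v -> E v u) -> reachable E x y -> reachable E y x.
Proof.
move=> Esym [s [Hs <-]]; elim: s x Hs => [|z s IH] x /=; first by exists [::].
move=> [Exz /IH Hzs]; apply: reachable_trans Hzs _; exact/reachable_edge/Esym.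
Qed.

Lemma shorten_walk E x s : is_walk E x s ->
  exists t, [/\ is_walk E x t, last x t = last x s & uniq (x :: t)].
Proof.
elim: s x => [|y s IH] x /=; first by exists [::].
move=> [Exy /IH [t [Ht <- Hu]]].
have [xt|xNt] := boolP (x \in y :: t); last by exists (y :: t); rewrite /= xNt.
have -> : last y t = last x (y :: t) by [].
have : is_walk E x (y :: t) by [].
move: Hu; case/splitPr: xt => t1 t2.
rewrite cat_uniq => /and3P[_ _ Hu] /walk_cat [_ /= [_ Ht2]].
by exists t2; rewrite last_cat.
Qed.

Definition edge_del E x y u v := E u v /\ ~ (u = x /\ v = y) /\ ~ (u = y /\ v = x).

Lemma edge_delC E x y u v : edge_del E x y u v -> edge_del E y x u v.
Proof. by move=> [Euv [Nxy Nyx]]. Qed.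

Lemma edge_del_sym E x y u v :
  (forall u v, E u v -> E v u) -> edge_del E x y u v -> edge_del E x y v u.
Proof.
move=> Esym [/Esym Evu [Nxy Nyx]]; split=> //.
by split=> -[? ?]; [apply: Nyx | apply: Nxy].
Qed.

Lemma edge_del_loop E x u v : (forall x, ~ E x x) -> E u v -> edge_del E x x u v.
Proof.
by move=> Eirr Euv; split=> //; split=> -[eux evx]; apply: (Eirr x); rewrite -{1}eux -evx.
Qed.

(* An equivalent form of acyclicity, better suited to rerouting arguments. *)
Definition no_return E := forall x y, E x y -> ~ reachable (edge_del E x y) y x.

Lemma acyclic_no_return E : (forall x, ~ E x x) -> acyclic E -> no_return E.
Proof.
move=> Eirr Eac x y Exy [q [Hq Hl]].
have [t [Ht Htl Hu]] := shorten_walk Hq.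
apply: Eac; exists x, (y :: t); split => //=.
- by split=> //; apply: sub_walk Ht => u v [].
- by rewrite Htl.
- case: t Ht Htl {Hu} => [|z [|z' t]] //=.
    by move=> _ Hyx; rewrite Hyx Hl in Exy; case: (Eirr _ Exy).
  by move=> [[_ [_ Nyz]] _] Hzx; case: Nyz; rewrite Hzx Hl.
Qed.

Lemma walk_edge_del E x y a q :
  is_walk E a q -> uniq (a :: q) -> last a q = x -> y \notin q ->
  (a = y -> q <> [:: x]) -> is_walk (edge_del E x y) a q.
Proof.
elim: q a => [|b q IH] a //= [Eab Hw] /andP[aNq Hu] Hl.
rewrite inE negb_or => /andP[yNb yNq] Hay; split; last first.
  by apply: IH => // eby; rewrite eby eqxx in yNb.
split=> //; split=> [[_ eby]|[ay bx]]; first by rewrite eby eqxx in yNb.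
apply: (Hay ay); case: q Hw Hu Hl {IH yNq aNq Hay} => [|d q] /=; first by rewrite bx.
by move=> _ /andP[/negP bNq _] Hl; case: bNq; rewrite bx -Hl mem_last.
Qed.

Lemma no_return_acyclic E : no_return E -> acyclic E.
Proof.
move=> Enr [x [[|y q] [Hw Hl Hs Hu]]] //.
move: Hw => [Exy Hq]; have /andP[yNq _] := Hu.
apply: (Enr x y Exy); exists q; split => //.
by apply: walk_edge_del => // _ q1; rewrite q1 in Hs.
Qed.

Lemma is_tree_transfer (P P' : vertex A -> Prop) E F (phi psi : vertex A -> vertex A) :
  (forall x, P x -> P' (phi x) /\ psi (phi x) = x) ->
  (forall y, P' y -> P (psi y) /\ phi (psi y) = y) ->
  (forall x y, E x y -> F (phi x) (phi y)) ->
  (forall x y, F x y -> E (psi x) (psi y)) ->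
  (forall x y, F x y -> P' x /\ P' y) ->
  is_tree P E -> is_tree P' F.
Proof.
move=> Pphi P'psi Ephi Fpsi FP' [[x Px] [Econn Eac]]; split.
  by exists (phi x); case: (Pphi _ Px).
split=> [y z Py Pz|].
  have [Ppy phy] := P'psi _ Py; have [Ppz phz] := P'psi _ Pz.
  have [s [Hs Hl]] := Econn _ _ Ppy Ppz.
  exists (map phi s); split; last by rewrite -phy last_map Hl.
  by rewrite -phy; apply: map_walk Hs.
move=> [y [s [Hs Hl Hsz Hu]]]; apply: Eac; exists (psi y), (map psi s).
have sP' := walk_mem (fun u v Fuv => (FP' u v Fuv).2) Hs.
have psi_inj : {in s &, injective psi}.
  by move=> u v /sP' /P'psi [_ phu] /sP' /P'psi [_ phv] e; rewrite -phu -phv e.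
split; rewrite ?size_map ?(map_inj_in_uniq psi_inj) //.
  exact: map_walk Hs.
by rewrite last_map Hl.
Qed.

End Walks.

Section StarReplacement.
Variables (A : finType) (P : vertex A -> Prop) (E : vertex A -> vertex A -> Prop).
Variables (F : pred (vertex A)) (N : vertex A -> Prop) (c x0 : vertex A).

(* The [F]-vertices of [(P, E)] have all their neighbours in [N] and span a tree
   together with [N]; the star graph replaces them by one fresh vertex [c]
   joined to every vertex of [N]. *)

Definition tree_vertex x := (P x /\ F x) \/ N x.
Definition tree_edge x y := E x y /\ (F x \/ F y).
Definition outer_edge x y := E x y /\ ~~ F x /\ ~~ F y.
Definition star_vertex x := x = c \/ (P x /\ ~~ F x).
Definition star_edge x y := outer_edge x y \/ (x = c /\ N y) \/ (N x /\ y = c).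

Hypothesis E_sym : forall x y, E x y -> E y x.
Hypothesis E_irr : forall x, ~ E x x.
Hypothesis E_vertex : forall x y, E x y -> P x /\ P y.
Hypothesis N_P : forall x, N x -> P x.
Hypothesis N_notF : forall x, N x -> ~~ F x.
Hypothesis EF_N : forall x y, E x y -> F x -> N y.
Hypothesis c_notP : ~ P c.
Hypothesis x0_P : P x0.
Hypothesis x0_F : F x0.
Hypothesis tree_connected : connected tree_vertex tree_edge.
Hypothesis tree_acyclic : acyclic tree_edge.

Lemma tree_edge_sym x y : tree_edge x y -> tree_edge y x.
Proof. by move=> [/E_sym Eyx [Fx|Fy]]; split=> //; [right|left]. Qed.

Lemma tree_edge_shape x y :
  tree_edge x y -> (P x /\ F x /\ N y) \/ (N x /\ P y /\ F y).
Proof.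
move=> [Exy [Fx|Fy]]; [left|right].
  by split; [case: (E_vertex Exy) | split=> //; apply: EF_N Exy Fx].
by split; [apply: EF_N (E_sym Exy) Fy | split=> //; case: (E_vertex Exy)].
Qed.

Lemma tree_edge_vertex x y : tree_edge x y -> tree_vertex x /\ tree_vertex y.
Proof. by case/tree_edge_shape=> [[Px [Fx Ny]]|[Nx [Py Fy]]]; split; by [left|right]. Qed.

Lemma tree_vertex_N x : tree_vertex x -> ~~ F x -> N x.
Proof. by case=> // -[_ ->]. Qed.

Lemma tree_no_return : no_return tree_edge.
Proof. by apply: acyclic_no_return tree_acyclic => x [/E_irr]. Qed.

Lemma N_neq_c x : N x -> x <> c.
Proof. by move=> /N_P Px xc; apply: c_notP; rewrite -xc. Qed.

Lemma outer_star_edge x y : outer_edge x y -> [/\ star_edge x y, x <> c & y <> c].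
Proof.
move=> Oxy; have [Px Py] := E_vertex Oxy.1.
split; [by left | move=> xc | move=> yc]; apply: c_notP; by [rewrite -xc | rewrite -yc].
Qed.

Lemma star_outer_edge x y : star_edge x y -> x <> c -> y <> c -> outer_edge x y.
Proof. by case=> [//|[[xc _]|[_ yc]]] xNc yNc; [case: xNc|case: yNc]. Qed.

Lemma star_edge_c x : star_edge c x -> N x.
Proof.
case=> [[/E_vertex [Pc _] _]|[[_ //]|[/N_neq_c]]] //; by case: c_notP.
Qed.

Lemma star_edge_N x : N x -> star_edge c x /\ star_edge x c.
Proof. by move=> Nx; split; right; [left|right]. Qed.

Lemma star_edge_sym x y : star_edge x y -> star_edge y x.
Proof.
case=> [[/E_sym Eyx [Fx Fy]]|[[-> Ny]|[Nx ->]]]; first by left.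
  by right; right.
by right; left.
Qed.

Lemma star_edge_irr x : ~ star_edge x x.
Proof. by case=> [[/E_irr]|[[xc /N_neq_c]|[/N_neq_c]]]. Qed.

Lemma outer_walk_notF x s : is_walk outer_edge x s -> ~~ F x -> ~~ F (last x s).
Proof. by elim: s x => [|y s IH] x //= [[_ [_ Fy]] /IH Hs] _; apply: Hs. Qed.

Lemma outer_reachable_notF x y : reachable outer_edge x y -> ~~ F x -> ~~ F y.
Proof. by move=> [s [Hs <-]]; apply: outer_walk_notF. Qed.

(* Together with any tree spanning [N], such a walk closes a cycle. *)
Definition outer_link := exists n1 n2,
  [/\ N n1, N n2, n1 <> n2 & reachable outer_edge n1 n2].

Lemma star_no_outer_link : no_return star_edge -> ~ outer_link.
Proof.
move=> Snr [n1 [n2 [N1 N2 n12 [r [Hr Hl]]]]].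
apply: (Snr c n1 (star_edge_N N1).1); exists (rcons r c).
split; last by rewrite last_rcons.
apply/walk_rcons; split.
  apply: sub_walk Hr => u v /outer_star_edge [Suv uc vc].
  by split=> //; split=> -[].
rewrite Hl; split; first exact: (star_edge_N N2).2.
by split=> -[n2c n21]; [apply: (N_neq_c N2) | apply: n12].
Qed.

Lemma no_return_no_outer_link : no_return E -> ~ outer_link.
Proof.
move=> Enr [n1 [n2 [N1 N2 n12 [r [Hr Hl]]]]].
have [t0 [Ht0 Hl0]] := tree_connected (or_intror N2) (or_intror N1).
have [[|z t] [Ht Htl Hu]] := shorten_walk Ht0; rewrite Hl0 in Htl; first by case: n12.
move: Ht Hu Htl => [Tz Ht] /andP[n2Nt _] /= Htl.
have Fz : F z.
  by case/tree_edge_shape: Tz => [[_ [Fn2 _]]|[_ [_ //]]]; move: (N_notF N2); rewrite Fn2.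
apply: (Enr n2 z Tz.1); exists (t ++ r); split; last by rewrite last_cat Htl.
apply/walk_cat; split.
  apply: sub_walk_mem Ht => u v u_zt v_t [Euv _]; split=> //.
  by split=> -[eu ev]; move: n2Nt; [rewrite -eu u_zt | rewrite -ev inE v_t orbT].
rewrite Htl; apply: sub_walk Hr => u v [Euv [Fu Fv]]; split=> //.
by split=> -[eu ev]; [move: Fv | move: Fu]; rewrite ?eu ?ev Fz.
Qed.

Definition collapse x := if F x then c else x.
Definition lift x := if x == c then x0 else x.

Lemma collapse_edge x y : E x y -> star_edge (collapse x) (collapse y).
Proof.
rewrite /collapse => Exy.
case: (boolP (F x)) => Fx; case: (boolP (F y)) => Fy.
- by move: (N_notF (EF_N Exy Fx)); rewrite Fy.
- by right; left; split=> //; apply: EF_N Exy Fx.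
- by right; right; split=> //; apply: EF_N (E_sym Exy) Fy.
- by left.
Qed.

Lemma collapse_vertex x : P x -> star_vertex (collapse x).
Proof. by rewrite /collapse; case: ifP => Fx Px; [left|right; rewrite Fx]. Qed.

Lemma lift_vertex x : star_vertex x -> P (lift x).
Proof.
rewrite /lift; case: eqP => [_ _ //|xNc [//|[]//]].
Qed.

Lemma collapseK x : star_vertex x -> collapse (lift x) = x.
Proof.
rewrite /lift /collapse; case: eqP => [-> _|xNc [//|[_ Fx]]]; first by rewrite x0_F.
by rewrite (negbTE Fx).
Qed.

Lemma lift_id x : x <> c -> lift x = x.
Proof. by rewrite /lift; case: eqP. Qed.

Lemma tree_edge_del x y u v :
  ~ tree_edge x y -> tree_edge u v -> edge_del E x y u v.
Proof.
move=> Txy Tuv; split; first exact: Tuv.1.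
by split=> -[eu ev]; apply: Txy; [|apply: tree_edge_sym]; rewrite -eu -ev.
Qed.

Lemma lift_step x y u v : ~ tree_edge x y ->
  edge_del star_edge x y u v -> reachable (edge_del E x y) (lift u) (lift v).
Proof.
move=> Txy [Suv [Nxy Nyx]].
have tree_path a b : tree_vertex a -> tree_vertex b -> reachable (edge_del E x y) a b.
  move=> Ta Tb; apply: sub_reachable (tree_connected Ta Tb) => ? ?.
  exact: tree_edge_del.
have Tx0 : tree_vertex x0 by left.
have lift_c : lift c = x0 by rewrite /lift eqxx.
case: (eqVneq u c) => [uc|/eqP uNc].
  have Nv : N v by apply: star_edge_c; rewrite -uc.
  by rewrite uc lift_c (lift_id (N_neq_c Nv)); apply: tree_path Tx0 (or_intror Nv).
case: (eqVneq v c) => [vc|/eqP vNc].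
  have Nu : N u by apply: star_edge_c; apply: star_edge_sym; rewrite -vc.
  by rewrite vc lift_c (lift_id (N_neq_c Nu)); apply: tree_path (or_intror Nu) Tx0.
rewrite (lift_id uNc) (lift_id vNc); apply: reachable_edge; split=> //.
exact: (star_outer_edge Suv uNc vNc).1.
Qed.

Lemma lift_reachable x y u v : ~ tree_edge x y ->
  reachable (edge_del star_edge x y) u v -> reachable (edge_del E x y) (lift u) (lift v).
Proof.
move=> Txy [s [Hs <-]]; elim: s u Hs => [|w s IH] u /=; first by move=> _; exists [::].
by move=> [Suw /IH]; apply: reachable_trans; apply: lift_step.
Qed.

(* Along a walk from [y] avoiding the tree edge [xy], one either is still in the
   tree, or has left it at some [n] in [N] and used outer edges only since, or
   has already found an outer link. *)
Definition tree_escape x y t :=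
  [\/ tree_vertex t /\ reachable (edge_del tree_edge x y) y t,
      exists2 n, N n & reachable (edge_del tree_edge x y) y n /\ reachable outer_edge n t
    | outer_link].

Lemma tree_escape_step x y t t' :
  tree_escape x y t -> edge_del E x y t t' -> tree_escape x y t'.
Proof.
move=> It [Ett' Nxy].
have Tdel : F t \/ F t' -> edge_del tree_edge x y t t' by split.
case: It => [[Tt Ryt]|[n Nn [Ryn Rnt]]|Hout]; last by constructor 3.
  case: (boolP (F t || F t')) => [/orP Ftt'|]; last rewrite negb_or => /andP[Ft Ft'].
    have Ttt' : tree_edge t t' by [].
    constructor 1; split; first by case: (tree_edge_vertex Ttt').
    exact: reachable_trans Ryt (reachable_edge (Tdel Ftt')).
  constructor 2; exists t; first exact: tree_vertex_N Tt Ft.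
  by split=> //; apply: reachable_edge.
have Ft := outer_reachable_notF Rnt (N_notF Nn).
case: (boolP (F t')) => Ft'; last first.
  constructor 2; exists n => //; split=> //.
  by apply: reachable_trans Rnt (reachable_edge _).
have Ttt' : tree_edge t t' by split=> //; right.
have Nt : N t.
  by case/tree_edge_shape: Ttt' => [[_ [Ft'' _]]|[]//]; move: Ft; rewrite Ft''.
have [tn|/eqP tNn] := eqVneq t n.
  constructor 1; split; first by case: (tree_edge_vertex Ttt').
  by apply: reachable_trans Ryn _; rewrite -tn; apply/reachable_edge/Tdel; right.
by constructor 3; exists n, t; split=> // nt; apply: tNn.
Qed.

Lemma tree_escape_reachable x y t t' :
  reachable (edge_del E x y) t t' -> tree_escape x y t -> tree_escape x y t'.
Proof.
move=> [s [Hs <-]]; elim: s t Hs => [|u s IH] t //= [Etu /IH Hs] It.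
exact/Hs/(tree_escape_step It).
Qed.

Lemma collapse_notF x : ~~ F x -> collapse x = x.
Proof. by rewrite /collapse => /negbTE ->. Qed.

Lemma collapse_eq x z : z <> c -> collapse x = z -> x = z.
Proof. by rewrite /collapse; case: ifP => // _ zNc cz; case: zNc. Qed.

Lemma no_return_of_star : no_return star_edge -> no_return E.
Proof.
move=> Snr x y Exy Ryx.
case: (boolP (F x || F y)) => [/orP Fxy|]; last rewrite negb_or => /andP[Fx Fy].
  have Txy : tree_edge x y by [].
  have [Tx Ty] := tree_edge_vertex Txy.
  have : tree_escape x y x.
    apply: tree_escape_reachable Ryx _.
    by constructor 1; split=> //; apply: reachable_refl.
  case=> [[_ Rt]|[n Nn [Ryn Rnx]]|]; last exact: star_no_outer_link.
    exact: tree_no_return Txy Rt.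
  have Nx := tree_vertex_N Tx (outer_reachable_notF Rnx (N_notF Nn)).
  have [xn|/eqP xNn] := eqVneq x n.
    by rewrite -xn in Ryn; apply: (tree_no_return Txy).
  by apply: star_no_outer_link Snr _; exists n, x; split=> // nx; apply: xNn.
have [Sxy xNc yNc] := outer_star_edge (conj Exy (conj Fx Fy)).
apply: (Snr x y Sxy).
have : reachable (edge_del star_edge x y) (collapse y) (collapse x).
  apply: map_reachable Ryx => u v [Euv [Nxy Nyx]]; split; first exact: collapse_edge.
  split=> -[eu ev]; [apply: Nxy | apply: Nyx].
    by split; [apply: collapse_eq xNc eu | apply: collapse_eq yNc ev].
  by split; [apply: collapse_eq yNc eu | apply: collapse_eq xNc ev].
by rewrite !collapse_notF.
Qed.

(* Along a walk from [c] avoiding the star edge [cn], once [c] is left through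
   some [m <> n] in [N] the walk can only continue by outer edges. *)
Definition star_escape n t :=
  t = c \/ exists2 m, N m /\ m <> n & reachable outer_edge m t.

Lemma star_escape_step n t t' :
  star_escape n t -> edge_del star_edge c n t t' -> star_escape n t'.
Proof.
move=> Jt [Stt' [Ncn _]].
have [t'c|/eqP t'Nc] := eqVneq t' c; first by left.
have [tc|/eqP tNc] := eqVneq t c.
  right; exists t'; last exact: reachable_refl.
  by split=> [|t'n]; [apply: star_edge_c; rewrite -tc | apply: Ncn].
case: Jt => [//|[m Nm Rmt]]; right; exists m => //.
exact: reachable_trans Rmt (reachable_edge (star_outer_edge Stt' tNc t'Nc)).
Qed.

Lemma star_escape_reachable n t t' :
  reachable (edge_del star_edge c n) t t' -> star_escape n t -> star_escape n t'.
Proof.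
move=> [s [Hs <-]]; elim: s t Hs => [|u s IH] t //= [Stu /IH Hs] Jt.
exact/Hs/(star_escape_step Jt).
Qed.

Lemma star_escape_link n : N n -> reachable (edge_del star_edge c n) c n -> outer_link.
Proof.
move=> Nn /star_escape_reachable /(_ (or_introl erefl)) [/N_neq_c //|[m [Nm mn] Rmn]].
by exists m, n.
Qed.

Lemma outer_not_tree_edge x y : outer_edge x y -> ~ tree_edge x y.
Proof. by move=> [_ [Fx Fy]] [_ [Fx'|Fy']]; [move: Fx|move: Fy]; rewrite ?Fx' ?Fy'. Qed.

Lemma star_no_return : no_return E -> no_return star_edge.
Proof.
move=> Enr x y Sxy Ryx; have Enl := no_return_no_outer_link Enr.
have [xc|/eqP xNc] := eqVneq x c.
  rewrite xc in Sxy Ryx; apply/Enl/(star_escape_link (star_edge_c Sxy)).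
  by apply: reachable_sym Ryx => u v; apply: edge_del_sym star_edge_sym.
have [yc|/eqP yNc] := eqVneq y c.
  rewrite yc in Sxy Ryx; apply/Enl/(star_escape_link (star_edge_c (star_edge_sym Sxy))).
  by apply: sub_reachable Ryx => u v; apply: edge_delC.
have Oxy := star_outer_edge Sxy xNc yNc.
case: (Enr x y Oxy.1).
by have := lift_reachable (outer_not_tree_edge Oxy) Ryx; rewrite !lift_id.
Qed.

Lemma star_connected : connected P E -> connected star_vertex star_edge.
Proof.
move=> Econn x y Sx Sy.
have := Econn _ _ (lift_vertex Sx) (lift_vertex Sy).
move/(map_reachable (f := collapse) collapse_edge).
by rewrite !collapseK.
Qed.

Lemma connected_of_star : connected star_vertex star_edge -> connected P E.
Proof.
move=> Sconn x y Px Py.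
have lift_collapse z :
    P z -> reachable E z (lift (collapse z)) /\ reachable E (lift (collapse z)) z.
  move=> Pz; rewrite /collapse; case: ifP => Fz.
    have Tz : tree_vertex z by left.
    have Tx0 : tree_vertex x0 by left.
    by rewrite /lift eqxx; split; apply: sub_reachable (tree_connected _ _) => // ? ? [].
  rewrite lift_id; first by split; apply: reachable_refl.
  by move=> zc; apply: c_notP; rewrite -zc.
apply: reachable_trans (lift_collapse _ Px).1 _.
apply: reachable_trans (lift_collapse _ Py).2.
have Tcc : ~ tree_edge c c by move=> [/E_irr].
apply: sub_reachable (lift_reachable Tcc _) => [? ? []//|].
apply: sub_reachable (Sconn _ _ (collapse_vertex Px) (collapse_vertex Py)) => ? ?.
exact: edge_del_loop star_edge_irr.
Qed.

Theorem star_replacement_tree : is_tree star_vertex star_edge <-> is_tree P E.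
Proof.
split=> [[_ [Sconn Sac]]|[_ [Econn Eac]]].
  split; first by exists x0.
  split; first exact: connected_of_star.
  exact: no_return_acyclic (no_return_of_star (acyclic_no_return star_edge_irr Sac)).
split; first by exists c; left.
split; first exact: star_connected.
exact: no_return_acyclic (star_no_return (acyclic_no_return E_irr Eac)).
Qed.

End StarReplacement.

Section Language.
Variables (A : finType) (X : config A -> Prop).
Implicit Types (s t : seq A).

Lemma window_cat (x : config A) (i : int) (n m : nat) :
  window x i (n + m) = window x i n ++ window x (i + n%:Z)%R m.
Proof.
rewrite /window iotaD map_cat add0n; congr (_ ++ _).
rewrite -[n in iota n m]addn0 iotaDl -map_comp; apply: eq_map => k /=.
by rewrite PoszD addrA.
Qed.

Lemma window_cons (x : config A) (i : int) (n : nat) :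
  window x (i - 1)%R n.+1 = x (i - 1)%R :: window x i n.
Proof.
rewrite /window /= addr0; congr (_ :: _).
rewrite -[1%N]addn0 iotaDl -map_comp; apply: eq_map => k /=.
by rewrite PoszD addrA subrK.
Qed.

Lemma lang_cat s t : lang X (s ++ t) -> lang X s /\ lang X t.
Proof.
move=> [x [i [Xx]]]; rewrite size_cat window_cat => /eqP.
rewrite eqseq_cat ?size_map ?size_iota // => /andP[/eqP ws /eqP wt].
by split; [exists x, i | exists x, (i + (size s)%:Z)%R].
Qed.

Lemma lang_catl s t : lang X (s ++ t) -> lang X s.
Proof. by case/lang_cat. Qed.

Lemma lang_catr s t : lang X (s ++ t) -> lang X t.
Proof. by case/lang_cat. Qed.

Lemma lang_extendl s : lang X s -> exists a, lang X (a :: s).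
Proof.
move=> [x [i [Xx ws]]]; exists (x (i - 1)%R), x, (i - 1)%R.
by rewrite /= window_cons -ws.
Qed.

End Language.

Section ExtensionGraphs.
Variables (A : finType) (X : config A -> Prop).
Implicit Types (L R : seq A -> Prop) (w u v : seq A) (p q : vertex A).

Lemma ext_edge_sym L R w p q : ext_edge X L R w p q -> ext_edge X L R w q p.
Proof.
by move=> [Pp [Pq [[? [? ?]]|[? [? ?]]]]]; split=> //; split=> //; [right|left].
Qed.

Lemma ext_edge_irr L R w p : ~ ext_edge X L R w p p.
Proof. by move=> [_ [_ [[-> []]|[-> []]]]]. Qed.

Lemma ext_edge_vertex L R w p q :
  ext_edge X L R w p q -> ext_vertex X L R w p /\ ext_vertex X L R w q.
Proof. by case=> [? [? _]]. Qed.

Lemma ext_edge_bipartite L R w p q : ext_edge X L R w p q -> p.1 != q.1.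
Proof. by case=> _ [_ [[-> [-> _]]|[-> [-> _]]]]. Qed.

Lemma ext_edge_lr L R w u v :
  ext_edge X L R w (false, u) (true, v) <-> [/\ L u, R v & lang X (u ++ w ++ v)].
Proof.
split=> [[[Lu _] [[Rv _] [[_ [_ //]]|[]//]]]|[Lu Rv Luwv]].
repeat split=> //; last by left.
  by apply: (lang_catl (t := v)); rewrite -catA.
exact: lang_catr Luwv.
Qed.

Lemma ext_edge_ind L R w (Q : vertex A -> vertex A -> Prop) :
  (forall p q, Q p q -> Q q p) ->
  (forall u v, [/\ L u, R v & lang X (u ++ w ++ v)] -> Q (false, u) (true, v)) ->
  forall p q, ext_edge X L R w p q -> Q p q.
Proof.
move=> Qsym Qlr [[] u] [[] v] Euv.
- by case: Euv => _ [_ [[]|[_ []]]].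
- by apply: Qsym; apply: Qlr; apply/ext_edge_lr; apply: ext_edge_sym.
- by apply: Qlr; apply/ext_edge_lr.
- by case: Euv => _ [_ [[_ []]|[]]].
Qed.

Lemma ext_edge_char L R w (E : vertex A -> vertex A -> Prop) :
  (forall p q, E p q -> E q p) -> (forall p q, E p q -> p.1 != q.1) ->
  (forall u v, E (false, u) (true, v) <-> [/\ L u, R v & lang X (u ++ w ++ v)]) ->
  forall p q, ext_edge X L R w p q <-> E p q.
Proof.
move=> Esym Ebip Elr p q; split; first by apply: ext_edge_ind => // u v /Elr.
case: p q => [[] u] [[] v] Euv; move: (Ebip _ _ Euv) => //= _.
  by apply: ext_edge_sym; apply/ext_edge_lr/Elr/Esym.
by apply/ext_edge_lr/Elr.
Qed.

Lemma is_tree_ext (P P' : vertex A -> Prop) (E E' : vertex A -> vertex A -> Prop) :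
  (forall p, P p <-> P' p) -> (forall p q, E p q <-> E' p q) ->
  is_tree P E <-> is_tree P' E'.
Proof.
suff ext_tree P1 P2 (E1 E2 : vertex A -> vertex A -> Prop) :
    (forall p, P1 p <-> P2 p) -> (forall p q, E1 p q <-> E2 p q) ->
    is_tree P1 E1 -> is_tree P2 E2.
  move=> PP' EE'; split; first exact: ext_tree PP' EE'.
  exact: ext_tree (fun p => iff_sym (PP' p)) (fun p q => iff_sym (EE' p q)).
move=> P12 E12 [[p P1p] [Econn Eac]]; split; first by exists p; apply/P12.
split=> [x y /P12 P1x /P12 P1y|[x [s [Hs Hx Hsz Hu]]]].
  have [s [Hs Hl]] := Econn x y P1x P1y.
  by exists s; split=> //; apply: sub_walk Hs => ? ? /E12.
by apply: Eac; exists x, s; split=> //; apply: sub_walk Hs => ? ? /E12.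
Qed.

End ExtensionGraphs.

Section LetterExtensions.
Variables (A : finType) (X : config A -> Prop) (w l : seq A) (U V : seq (seq A)).
Variable a0 : A.
Hypothesis U_suffix_code : suffix_code (fun u => u \in U).
Hypothesis lw_lang : lang X (l ++ w).
Hypothesis a0lw_lang : lang X (a0 :: l ++ w).
Hypothesis AlU : forall a : A, lang X (a :: l) -> (a :: l) \in U.

Local Notation inU := (fun u : seq A => u \in U).
Local Notation inV := (fun v : seq A => v \in V).
Local Notation P := (ext_vertex X inU inV w).
Local Notation E := (ext_edge X inU inV w).

Definition U' u := (u \in U /\ ~ (exists a : A, u = a :: l)) \/ u = l.

(* [letter_l] marks the left vertices [a l]; [right_lw] is the right part of
   E_{A,V}(l w). *)
Definition letter_l (p : vertex A) : bool :=
  ~~ p.1 && (if p.2 is _ :: t then t == l else false).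

Definition right_lw (p : vertex A) := [/\ p.1, p.2 \in V & lang X (l ++ w ++ p.2)].

Lemma letter_l_cons a : letter_l (false, a :: l).
Proof. by rewrite /letter_l /= eqxx. Qed.

Lemma letter_lP p : reflect (exists a, p = (false, a :: l)) (letter_l p).
Proof.
apply: (iffP idP) => [|[a ->]]; last exact: letter_l_cons.
by case: p => [[] [|a t]] //= /eqP ->; exists a.
Qed.

Lemma not_letter_l u : ~~ letter_l (false, u) <-> ~ (exists a : A, u = a :: l).
Proof.
split=> [Fu [a eu]|Nal]; first by move: Fu; rewrite eu letter_l_cons.
by apply/letter_lP => -[a [eu]]; apply: Nal; exists a.
Qed.

Lemma l_notin_U : l \notin U.
Proof.
apply/negP => lU.
have a0lU : (a0 :: l) \in U by apply/AlU/(lang_catl (t := w)).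
by have /(congr1 size) /= /n_Sn := U_suffix_code lU a0lU (suffix_cons l a0).
Qed.

Lemma l_vertex : ~ P (false, l).
Proof. by case=> lU _; move: l_notin_U; rewrite lU. Qed.

Lemma letter_l_vertex a : lang X (a :: l ++ w) -> P (false, a :: l).
Proof. by split=> //; apply/AlU/(lang_catl (t := w)). Qed.

Lemma E_letter_l p q : E p q -> letter_l p -> right_lw q.
Proof.
move=> Epq /letter_lP [a ep]; move: Epq (ext_edge_bipartite Epq); rewrite ep.
case: q => [[] v] // /ext_edge_lr [_ Vv alwv] _.
by split=> //; apply: (lang_catr (s := [:: a])).
Qed.

Lemma right_lw_vertex p : right_lw p -> P p.
Proof. by case: p => [[] v] [] //= _ Vv lwv; split=> //; apply: lang_catr lwv. Qed.

Lemma right_lw_not_letter p : right_lw p -> ~~ letter_l p.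
Proof. by case: p => [[] v] []. Qed.

Lemma U'_vertex p : ext_vertex X U' inV w p <-> star_vertex P letter_l (false, l) p.
Proof.
case: p => [[] u]; rewrite /ext_vertex /star_vertex /=.
  by split=> [|[//|[]//]]; right.
split=> [[[[Uu /not_letter_l Fu]|->] uw]|[[->]|[[Uu uw] /not_letter_l Nal]]].
- by right.
- by left.
- by split=> //; right.
- by split=> //; left.
Qed.

Lemma U'_edge p q :
  ext_edge X U' inV w p q <-> star_edge E letter_l right_lw (false, l) p q.
Proof.
apply: ext_edge_char => [{}p {}q|{}p {}q|u v].
- by apply: star_edge_sym => x y; apply: ext_edge_sym.
- by case=> [[/ext_edge_bipartite //]|[[-> [-> _ _]]|[[-> _ _] ->]]].
split=> [[[/ext_edge_lr [Uu Vv uwv] [/not_letter_l Nal _]]|[[[->]] [_ Vv lwv]|[[] //]]]|].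
- by split=> //; left.
- by split=> //; right.
case=> [[[Uu /not_letter_l Fu]|->] Vv uwv]; last by right; left.
by left; split; first exact/ext_edge_lr.
Qed.

Definition append_l (p : vertex A) : vertex A :=
  if p.1 then p else (false, p.2 ++ l).
Definition first_letter (p : vertex A) : vertex A :=
  if p.1 then p else (false, take 1 p.2).

Local Notation T := (ext_edge X (@letters A) inV (l ++ w)).
Local Notation PT := (ext_vertex X (@letters A) inV (l ++ w)).
Local Notation Ptree := (tree_vertex P letter_l right_lw).
Local Notation Etree := (tree_edge E letter_l).

Lemma append_l_vertex p : PT p -> Ptree (append_l p) /\ first_letter (append_l p) = p.
Proof.
case: p => [[] s] [Ls lang_s].
  by split=> //; right; split=> //; rewrite catA.
case: s Ls lang_s => [|a [|]] // _ alw.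
rewrite /append_l /first_letter /= take0; split=> //.
by left; split; [apply: letter_l_vertex | apply: letter_l_cons].
Qed.

Lemma first_letter_vertex p :
  Ptree p -> PT (first_letter p) /\ append_l (first_letter p) = p.
Proof.
rewrite /first_letter /append_l.
case=> [[Pp /letter_lP [a ep]]|]; first by move: Pp; rewrite ep /= take0 => -[_ alw].
by case: p => [[] v] [] //= _ Vv lwv; split=> //; split=> //; rewrite -catA.
Qed.

Lemma append_l_edge p q : T p q -> Etree (append_l p) (append_l q).
Proof.
apply: (ext_edge_ind (Q := fun p q => Etree (append_l p) (append_l q)))
  => [{}p {}q|u v [Lu Vv uwv]].
  by apply: tree_edge_sym => x y; apply: ext_edge_sym.
case: u Lu uwv => [|a [|]] // _ alwv; split; last by left; apply: letter_l_cons.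
apply/ext_edge_lr; split=> //; last by rewrite -catA in alwv.
by apply/AlU/(lang_catl (t := w ++ v)); rewrite -catA in alwv.
Qed.

Lemma first_letter_edge p q : Etree p q -> T (first_letter p) (first_letter q).
Proof.
move=> [Epq]; move: p q Epq.
apply: (ext_edge_ind
  (Q := fun p q => letter_l p \/ letter_l q -> T (first_letter p) (first_letter q)))
  => [p q Tpq Fqp|u v [Uu Vv uwv]].
  by apply/ext_edge_sym/Tpq; case: Fqp; [right|left].
case=> [/letter_lP [a [eu]]|//]; rewrite {}eu in uwv *; rewrite /first_letter /= take0.
by apply/ext_edge_lr; split=> //; rewrite /= -catA.
Qed.

Lemma letter_tree :
  ext_graph_tree X (@letters A) inV (l ++ w) -> is_tree Ptree Etree.
Proof.
have E_sym p q : E p q -> E q p by apply: ext_edge_sym.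
have E_vertex p q : E p q -> P p /\ P q by apply: ext_edge_vertex.
apply: is_tree_transfer; [exact: append_l_vertex | exact: first_letter_vertex |
  exact: append_l_edge | exact: first_letter_edge |].
exact: (tree_edge_vertex E_sym E_vertex E_letter_l).
Qed.

Lemma U'_tree_equiv : ext_graph_tree X (@letters A) inV (l ++ w) ->
  ext_graph_tree X U' inV w <-> ext_graph_tree X inU inV w.
Proof.
move=> /letter_tree [_ [Tconn Tacyc]].
have E_sym p q : E p q -> E q p by apply: ext_edge_sym.
have E_vertex p q : E p q -> P p /\ P q by apply: ext_edge_vertex.
apply: iff_trans (is_tree_ext U'_vertex U'_edge) _.
exact: star_replacement_tree E_sym (@ext_edge_irr _ X _ _ w) E_vertex
  right_lw_vertex right_lw_not_letter E_letter_l l_vertex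
  (letter_l_vertex a0lw_lang) (letter_l_cons a0) Tconn Tacyc.
Qed.

End LetterExtensions.

Theorem mainTheorem14 (A : finType) (X : config A -> Prop) (w : seq A)
  (U V : seq (seq A)) (l : seq A) :
  shift_space X ->
  lang X w ->
  X_max_suffix_code X (fun u => u \in U) ->
  X_max_prefix_code X (fun v => v \in V) ->
  lang X l ->
  lang X (l ++ w) ->
  (forall a : A, lang X (a :: l) -> (a :: l) \in U) ->
  ext_graph_tree X (@letters A) (fun v => v \in V) (l ++ w) ->
  (ext_graph_tree X
     (fun u => (u \in U /\ ~ (exists a : A, u = a :: l)) \/ u = l)
     (fun v => v \in V) w
   <-> ext_graph_tree X (fun u => u \in U) (fun v => v \in V) w).
Proof.
(* Only the suffix-code property of [U] enters the graph argument. *)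
move=> _ _ [_ [U_suffix_code _]] _ _ lw_lang AlU.
have [a0 a0lw_lang] := lang_extendl lw_lang.
exact: U'_tree_equiv U_suffix_code lw_lang a0lw_lang AlU.
Qed.
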